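(* Let $g$ be a symplectic potential on $P$ with $y=\partial g/\partial x$, $w_j=e^{y_j+i\theta_j}$, and $X_g=-\sum_jy_j\partial_{\theta_j}$ its Hamiltonian vector field on $\check X_P$. Then for every $m\in\mathbb Z^n$ the series $e^{iX_g}e^{im\cdot\theta}=\sum_{k\ge0}\frac{i^k}{k!}X_g^k\,e^{im\cdot\theta}$ converges and equals $w^m=w_1^{m_1}\cdots w_n^{m_n}$, and the time-$i$ flow $e^{iX_g}$ induces an algebra isomorphism from the algebra $\mathcal A$ generated by the characters $e^{im\cdot\theta}$, $m\in\mathbb Z^n$, of $\mathbb T^n$ onto the algebra generated by the $I_g$-monomial (meromorphic) functions $w^m$, $m\in\mathbb Z^n$, on $(X_P,I_g)$, sending $e^{im\cdot\theta}\mapsto w^m$.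
   Context: Let $P=\{x:\ell_j(x)=\langle\nu_j,x\rangle+\lambda_j\ge0\}$ be a Delzant polytope with interior $\check P$, $(X_P,\omega)$ the associated compact symplectic toric manifold with moment map $\mu$ and action-angle coordinates $(x,\theta)$ on $\check X_P=\mu^{-1}(\check P)\cong\check P\times\mathbb T^n$, $\omega=\sum dx^j\wedge d\theta_j$. A symplectic potential is $g=\frac12\sum\ell_j\log\ell_j+\varphi$, $\varphi\in C^\infty(P)$, with positive definite Hessian on $\check P$ and $\det H_g=(\alpha\prod\ell_j)^{-1}$ for a smooth positive $\alpha$ on $P$; it determines a toric complex structure $I_g$ on $X_P$ for which $(\check X_P,I_g)\cong(\mathbb C^* )^n$ via $(x,\theta)\mapsto w=e^{y+i\theta}$, $y=\partial g/\partial x$. *)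

From mathcomp Require Import all_boot all_order all_algebra.
From mathcomp Require Import all_classical all_reals all_analysis.
From mathcomp Require Import complex.
Set Implicit Arguments. Unset Strict Implicit. Unset Printing Implicit Defensive.
Import Order.TTheory GRing.Theory Num.Theory numFieldNormedType.Exports.
Local Open Scope ring_scope.
Local Open Scope classical_set_scope.

Definition cRe (R : realType) (z : R[i]) : R := complex.Re z.
Definition cIm (R : realType) (z : R[i]) : R := complex.Im z.

Definition dotR (R : realType) (n : nat) (u v : 'rV[R]_n) : R :=
  \sum_(i < n) u 0 i * v 0 i.

Definition intvec (R : realType) (n : nat) (m : 'rV[int]_n) : 'rV[R]_n :=
  \row_(i < n) (m 0 i)%:~R.

Definition ebasis (R : realType) (n : nat) (j : 'I_n) : 'rV[R]_n :=
  delta_mx 0 j.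

Definition ell (R : realType) (n d : nat) (nu : 'I_d -> 'rV[int]_n)
  (lam : 'I_d -> R) (j : 'I_d) (x : 'rV[R]_n) : R :=
  dotR (intvec R (nu j)) x + lam j.

Definition polytope (R : realType) (n d : nat) (nu : 'I_d -> 'rV[int]_n)
  (lam : 'I_d -> R) : set 'rV[R]_n :=
  [set x | forall j, 0 <= ell nu lam j x].

Definition polytope_int (R : realType) (n d : nat) (nu : 'I_d -> 'rV[int]_n)
  (lam : 'I_d -> R) : set 'rV[R]_n :=
  [set x | forall j, 0 < ell nu lam j x].

Definition active (R : realType) (n d : nat) (nu : 'I_d -> 'rV[int]_n)
  (lam : 'I_d -> R) (x : 'rV[R]_n) : {set 'I_d} :=
  [set j | ell nu lam j x == 0].

(* x is a vertex of P: x in P and the normals of the facets through x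
   span R^n (equivalently, x is an extreme point of P). *)
Definition is_vertex (R : realType) (n d : nat) (nu : 'I_d -> 'rV[int]_n)
  (lam : 'I_d -> R) (x : 'rV[R]_n) : Prop :=
  polytope nu lam x /\
  forall v : 'rV[R]_n, exists c : 'I_d -> R,
    (forall j, j \notin active nu lam x -> c j = 0) /\
    v = \sum_(j < d) c j *: intvec R (nu j).

(* Delzant polytope, given by a minimal presentation with inward normals
   nu_j in Z^n:  P is compact with nonempty interior, every l_j cuts out a
   facet (the presentation is irredundant), and at every vertex exactly n
   facets meet and their normals form a Z-basis of Z^n (n vectors spanning
   Z^n over Z). *)
Definition Delzant (R : realType) (n d : nat) (nu : 'I_d -> 'rV[int]_n)
  (lam : 'I_d -> R) : Prop :=
  [/\ bounded_set (polytope nu lam),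
      polytope_int nu lam !=set0,
      (forall j, exists x, polytope nu lam x /\ ell nu lam j x = 0 /\
                   (forall i, i != j -> 0 < ell nu lam i x)) &
      (forall x, is_vertex nu lam x ->
         #|active nu lam x| = n /\
         forall z : 'rV[int]_n, exists c : 'I_d -> int,
           (forall j, j \notin active nu lam x -> c j = 0) /\
           z = \sum_(j < d) c j *: nu j)].

Fixpoint iterD (R : realType) (n : nat) (vs : seq 'rV[R]_n)
  (f : 'rV[R]_n -> R) : 'rV[R]_n -> R :=
  match vs with
  | [::] => f
  | v :: vs' => fun x => derive (iterD vs' f) x v
  end.

Definition smooth_on (R : realType) (n : nat) (U : set 'rV[R]_n)
  (f : 'rV[R]_n -> R) : Prop :=
  open U /\ forall (vs : seq 'rV[R]_n) x, U x -> differentiable (iterD vs f) x.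

(* f in C^infty(K) for a closed set K: f is smooth on an open
   neighbourhood of K. *)
Definition smooth_up_to (R : realType) (n : nat) (K : set 'rV[R]_n)
  (f : 'rV[R]_n -> R) : Prop :=
  exists U, K `<=` U /\ smooth_on U f.

Definition hessian (R : realType) (n : nat) (g : 'rV[R]_n -> R)
  (x : 'rV[R]_n) : 'M[R]_n :=
  \matrix_(i < n, j < n) iterD [:: ebasis R i; ebasis R j] g x.

Definition symplectic_potential (R : realType) (n d : nat)
  (nu : 'I_d -> 'rV[int]_n) (lam : 'I_d -> R) (g : 'rV[R]_n -> R) : Prop :=
  (exists phi : 'rV[R]_n -> R,
     smooth_up_to (polytope nu lam) phi /\
     forall x, polytope nu lam x ->
       g x = 2^-1 * \sum_(j < d) ell nu lam j x * ln (ell nu lam j x) + phi x)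
  /\ (forall x, polytope_int nu lam x ->
        forall v : 'rV[R]_n, v != 0 -> 0 < (v *m hessian g x *m v^T) 0 0)
  /\ (exists alpha : 'rV[R]_n -> R,
        smooth_up_to (polytope nu lam) alpha /\
        (forall x, polytope nu lam x -> 0 < alpha x) /\
        forall x, polytope_int nu lam x ->
          \det (hessian g x) = (alpha x * \prod_(j < d) ell nu lam j x)^-1).

Definition ycoord (R : realType) (n : nat) (g : 'rV[R]_n -> R) (j : 'I_n)
  (x : 'rV[R]_n) : R :=
  derive g x (ebasis R j).

(* Complex functions on \check X_P = \check P x T^n, in action-angle   *)
(* coordinates (x, theta), theta in R^n taken mod 2 pi.                *)

Definition cfun (R : realType) (n : nat) := 'rV[R]_n -> 'rV[R]_n -> R[i].

Definition expi (R : realType) (t : R) : R[i] := Complex (cos t) (sin t).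

Definition character (R : realType) (n : nat) (m : 'rV[int]_n) : cfun R n :=
  fun x theta => expi (dotR (intvec R m) theta).

Definition wcoord (R : realType) (n : nat) (g : 'rV[R]_n -> R) (j : 'I_n)
  : cfun R n :=
  fun x theta => ((expR (ycoord g j x))%:C)%C * expi (theta 0 j).

Definition wmonomial (R : realType) (n : nat) (g : 'rV[R]_n -> R)
  (m : 'rV[int]_n) : cfun R n :=
  fun x theta => \prod_(j < n) (wcoord g j x theta) ^ (m 0 j).

Definition dtheta (R : realType) (n : nat) (j : 'I_n) (f : cfun R n)
  : cfun R n :=
  fun x theta =>
    Complex (derive (fun t => cRe (f x t)) theta (ebasis R j))
            (derive (fun t => cIm (f x t)) theta (ebasis R j)).

Definition Xg (R : realType) (n : nat) (g : 'rV[R]_n -> R) (f : cfun R n)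
  : cfun R n :=
  fun x theta => - \sum_(j < n) ((ycoord g j x)%:C)%C * dtheta j f x theta.

Definition expiX_partial (R : realType) (n : nat) (g : 'rV[R]_n -> R)
  (f : cfun R n) (N : nat) : cfun R n :=
  fun x theta =>
    \sum_(k < N) (('i)%C ^+ k / (k`!)%:R) * iter k (Xg g) f x theta.

Definition expiX_converges_to (R : realType) (n : nat) (g : 'rV[R]_n -> R)
  (f : cfun R n) (x theta : 'rV[R]_n) (h : R[i]) : Prop :=
  (fun N => cRe (expiX_partial g f N x theta)) @ \oo --> cRe h /\
  (fun N => cIm (expiX_partial g f N x theta)) @ \oo --> cIm h.

Definition subalgebra (R : realType) (n : nat) (S : set (cfun R n)) : Prop :=
  [/\ S (fun _ _ => 1),
      (forall f h, S f -> S h -> S (fun x t => f x t + h x t)),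
      (forall f h, S f -> S h -> S (fun x t => f x t * h x t)) &
      (forall (c : R[i]) f, S f -> S (fun x t => c * f x t))].

Definition gen_algebra (R : realType) (n : nat) (G : set (cfun R n))
  : set (cfun R n) :=
  [set f | forall S, subalgebra S -> G `<=` S -> S f].

From mathcomp Require Import all_boot all_order all_algebra.
From mathcomp Require Import all_classical all_reals all_analysis.
From mathcomp Require Import complex ring.
Set Implicit Arguments. Unset Strict Implicit. Unset Printing Implicit Defensive.
Import Order.TTheory GRing.Theory Num.Theory numFieldNormedType.Exports.
Local Open Scope ring_scope.
Local Open Scope classical_set_scope.

(* X_g = - sum_j y_j d/dtheta_j differentiates only in theta, and on a function
   a(x) e^{i m.theta} it acts as multiplication by -i <m, y(x)>.  Hence the
   exponential series of i X_g applied to e^{i m.theta} is the scalar series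
   sum_k <m, y>^k / k! times e^{i m.theta}, which converges to
   e^{<m, y>} e^{i m.theta} = w^m.  Characters multiply as their frequencies
   add, and so do the monomials w^m, so A and B consist of the finite linear
   combinations of characters and of monomials respectively, and the limit of
   the series is multiplicative on A.  It is injective because the series of
   -i X_g evaluated at one interior point x0 recovers sum_m c_m e^{i m.theta}
   from sum_m c_m w^m(x0, -). *)

Section ComplexFacts.
Variable R : realType.
Local Notation C := R[i].

Lemma complex_ext (z w : C) : cRe z = cRe w -> cIm z = cIm w -> z = w.
Proof. by case: z => a b; case: w => c d /= -> ->. Qed.

Lemma cReM (z w : C) : cRe (z * w) = cRe z * cRe w - cIm z * cIm w.
Proof. by case: z; case: w. Qed.

Lemma cImM (z w : C) : cIm (z * w) = cRe z * cIm w + cIm z * cRe w.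
Proof. by case: z; case: w. Qed.

Lemma cRe_sum T (s : seq T) (F : T -> C) :
  cRe (\sum_(p <- s) F p) = \sum_(p <- s) cRe (F p).
Proof. by apply: big_morph => // -[a b] [c d]. Qed.

Lemma cIm_sum T (s : seq T) (F : T -> C) :
  cIm (\sum_(p <- s) F p) = \sum_(p <- s) cIm (F p).
Proof. by apply: big_morph => // -[a b] [c d]. Qed.

Lemma expiD (a b : R) : expi (a + b) = expi a * expi b.
Proof. by apply: complex_ext; rewrite ?cReM ?cImM /= ?cosD ?sinD; ring. Qed.

Lemma expi0 : expi 0 = 1 :> C.
Proof. by apply: complex_ext; rewrite /= ?cos0 ?sin0. Qed.

Lemma expR_complexD (a b : R) : (expR (a + b))%:C%C = (expR a)%:C%C * (expR b)%:C%C :> C.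
Proof. by rewrite expRD rmorphM. Qed.

Lemma expR_complex0 : (expR 0)%:C%C = 1 :> C.
Proof. by rewrite expR0 rmorph1. Qed.

Lemma morph_intrM (phi : R -> C) :
  {morph phi : a b / a + b >-> a * b} -> phi 0 = 1 ->
  forall (z : int) a, phi (z%:~R * a) = phi a ^ z.
Proof.
move=> phiD phi0.
have phi_natM k a : phi (k%:R * a) = phi a ^+ k.
  elim: k => [|k IHk]; first by rewrite mul0r phi0 expr0.
  by rewrite -addn1 natrD mulrDl mul1r phiD IHk exprD expr1.
case=> k a; first exact: phi_natM.
rewrite NegzE mulNr -exprnN -phi_natM.
have inv : phi (k.+1%:R * a) * phi (- (k.+1%:R * a)) = 1 by rewrite -phiD subrr.
by rewrite -(mulr1_eq inv).
Qed.

End ComplexFacts.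

Section DirectionalDerivative.
Variable R : realType.
Local Notation C := R[i].

Lemma is_derive_along (V : normedModType R) (f : V -> R) (th v : V) (df : R) :
  is_derive (0 : R) 1 (fun h : R => f (h *: v + th)) df -> is_derive th v f df.
Proof.
have dirE : 'D_v f th = 'D_1 (fun h : R => f (h *: v + th)) (0 : R).
  rewrite /derive; set g1 := fun h => h^-1 *: _; set g2 := fun h => h^-1 *: _.
  suff -> : g1 = g2 by [].
  by apply/funext => h; rewrite /g1 /g2 /= addr0 scale0r add0r [_%:A]mulr1.
move=> [df_ex <-]; apply: DeriveDef; first exact/derivable1P.
exact: dirE.
Qed.

Lemma is_derive_comp_dotR (n : nat) (F F' : R -> R) (u th v : 'rV[R]_n) :
  (forall a : R, is_derive a 1 F (F' a)) ->
  is_derive th v (fun t => F (dotR u t)) (F' (dotR u th) * dotR u v).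
Proof.
move=> dF; apply: is_derive_along.
have -> : (fun h : R => F (dotR u (h *: v + th))) =
          F \o (fun h => dotR u v * h + dotR u th).
  apply/funext => h /=; congr F; rewrite /dotR mulr_suml -big_split /=.
  by apply: eq_bigr => i _; rewrite !mxE; ring.
have affine : is_derive (0 : R) 1 (dotR u v \*: id + cst (dotR u th)) (dotR u v).
  by apply: is_derive_eq; rewrite ?scaler1 ?addr0.
by apply: is_derive1_comp; rewrite ?mulr0 ?add0r.
Qed.

Definition is_cderive (n : nat) (f : 'rV[R]_n -> C) (th v : 'rV[R]_n) (df : C) :=
  is_derive th v (fun t => cRe (f t)) (cRe df) /\
  is_derive th v (fun t => cIm (f t)) (cIm df).

End DirectionalDerivative.

Section TrigonometricPolynomials.
Variables (R : realType) (n : nat).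
Local Notation C := R[i].
Local Notation coefs := (seq ('rV[int]_n * ('rV[R]_n -> C))).
Implicit Types (m : 'rV[int]_n) (u x t th v : 'rV[R]_n) (s : coefs).

(* Trigonometric polynomials in theta with coefficients depending on x: the
   class on which X_g acts diagonally. *)
Definition tpoly s : cfun R n := fun x t => \sum_(p <- s) p.2 x * character p.1 x t.

Definition tscale (c : 'rV[int]_n -> 'rV[R]_n -> C) s : coefs :=
  [seq (p.1, fun x => c p.1 x * p.2 x) | p <- s].

Lemma eq_tscale c c' s : (forall m x, c m x = c' m x) -> tscale c s = tscale c' s.
Proof.
move=> cc'; apply: eq_map => p /=.
by congr pair; apply/funext => x; rewrite cc'.
Qed.

Lemma tscale_comp c c' s :
  tscale c (tscale c' s) = tscale (fun m x => c m x * c' m x) s.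
Proof.
rewrite /tscale -map_comp; apply: eq_map => p /=.
by congr pair; apply/funext => x; rewrite mulrA.
Qed.

Lemma tscale1 s : tscale (fun _ _ => 1) s = s.
Proof.
rewrite /tscale -[RHS]map_id; apply: eq_map => -[m a] /=.
by congr pair; apply/funext => x; rewrite mul1r.
Qed.

Lemma is_cderive_expi_dotR u th v :
  is_cderive (fun t => expi (dotR u t)) th v
    ('i * (dotR u v)%:C * expi (dotR u th))%C.
Proof.
split.
  apply: is_derive_eq (@is_derive_comp_dotR R n cos _ u th v (@is_derive_cos R)) _.
  by rewrite cReM cImM /=; ring.
apply: is_derive_eq (@is_derive_comp_dotR R n sin _ u th v (@is_derive_sin R)) _.
by rewrite cImM cReM /=; ring.
Qed.

Lemma is_cderive_eq (f : 'rV[R]_n -> C) th v df df' :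
  is_cderive f th v df -> df = df' -> is_cderive f th v df'.
Proof. by move=> + <-. Qed.

Lemma is_cderiveMl (c : C) (f : 'rV[R]_n -> C) th v df :
  is_cderive f th v df -> is_cderive (fun t => c * f t) th v (c * df).
Proof.
move=> [dRe dIm]; split.
  have -> : (fun t => cRe (c * f t)) =
            cRe c \*: (fun t => cRe (f t)) - cIm c \*: (fun t => cIm (f t)).
    by apply/funext => t; rewrite cReM.
  exact: is_derive_eq (is_deriveB (is_deriveZ _ dRe) (is_deriveZ _ dIm))
                      (esym (cReM _ _)).
have -> : (fun t => cIm (c * f t)) =
          cRe c \*: (fun t => cIm (f t)) + cIm c \*: (fun t => cRe (f t)).
  by apply/funext => t; rewrite cImM.
exact: is_derive_eq (is_deriveD (is_deriveZ _ dIm) (is_deriveZ _ dRe))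
                    (esym (cImM _ _)).
Qed.

Lemma is_derive_sum_seq T (r : seq T) (F : T -> 'rV[R]_n -> R) (dF : T -> R) th v :
  (forall p, is_derive th v (F p) (dF p)) ->
  is_derive th v (fun t => \sum_(p <- r) F p t) (\sum_(p <- r) dF p).
Proof.
move=> dFp; elim: r => [|p r IHr].
  have -> : (fun t => \sum_(p <- [::]) F p t) = cst 0.
    by apply/funext => t; rewrite big_nil.
  by rewrite big_nil; exact: is_derive_cst.
have -> : (fun t => \sum_(q <- p :: r) F q t) =
          F p + (fun t => \sum_(q <- r) F q t).
  by apply/funext => t; rewrite big_cons.
by rewrite big_cons; exact: is_deriveD.
Qed.

Lemma is_cderive_sum T (r : seq T) (F : T -> 'rV[R]_n -> C) (dF : T -> C) th v :
  (forall p, is_cderive (F p) th v (dF p)) ->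
  is_cderive (fun t => \sum_(p <- r) F p t) th v (\sum_(p <- r) dF p).
Proof.
move=> dFp; split.
  under [fun t => _]funext do rewrite cRe_sum.
  by rewrite cRe_sum; apply: is_derive_sum_seq => p; case: (dFp p).
under [fun t => _]funext do rewrite cIm_sum.
by rewrite cIm_sum; apply: is_derive_sum_seq => p; case: (dFp p).
Qed.

Lemma dtheta_cderive j (f : cfun R n) x th df :
  is_cderive (f x) th (ebasis R j) df -> dtheta j f x th = df.
Proof. by case: df => a b [dRe dIm]; rewrite /dtheta !derive_val. Qed.

Lemma dotR_ebasis u j : dotR u (ebasis R j) = u 0 j.
Proof.
rewrite /dotR (bigD1 j) //= big1 => [|i /negbTE ij].
  by rewrite /ebasis mxE !eqxx mulr1 addr0.
by rewrite /ebasis mxE ij andbF mulr0.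
Qed.

Lemma dtheta_tpoly j s x :
  dtheta j (tpoly s) x = tpoly (tscale (fun m _ => 'i * ((m 0 j)%:~R : R)%:C)%C s) x.
Proof.
apply/funext => th; apply: dtheta_cderive.
rewrite /tpoly big_map; apply: is_cderive_sum => p.
apply: is_cderive_eq (is_cderiveMl (p.2 x) (is_cderive_expi_dotR _ _ _)) _.
by rewrite dotR_ebasis mxE /character /=; ring.
Qed.

Definition ypair (g : 'rV[R]_n -> R) m x : R :=
  \sum_(j < n) (m 0 j)%:~R * ycoord g j x.

Definition Xg_eigenvalue (g : 'rV[R]_n -> R) m x : C := (- 'i * (ypair g m x)%:C)%C.

Lemma Xg_tpoly g s : Xg g (tpoly s) = tpoly (tscale (Xg_eigenvalue g) s).
Proof.
apply/funext => x; apply/funext => t; rewrite /Xg.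
under eq_bigr do rewrite dtheta_tpoly /tpoly big_map mulr_sumr.
rewrite exchange_big /tpoly big_map -sumrN; apply: eq_bigr => p _.
rewrite /= /Xg_eigenvalue /ypair rmorph_sum mulr_sumr !mulr_suml -sumrN.
by apply: eq_bigr => j _; rewrite rmorphM /=; ring.
Qed.

Lemma iter_Xg_tpoly g k s :
  iter k (Xg g) (tpoly s) = tpoly (tscale (fun m x => Xg_eigenvalue g m x ^+ k) s).
Proof.
elim: k => [|k IHk]; first by under eq_tscale do rewrite expr0; rewrite tscale1.
by rewrite iterS IHk Xg_tpoly tscale_comp; under eq_tscale do rewrite -exprS.
Qed.

End TrigonometricPolynomials.

Section ComplexSequences.
Variable R : realType.
Local Notation C := R[i].
Implicit Types (u : nat -> C) (z w : C).

Definition ccvg u z : Prop :=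
  (fun N => cRe (u N)) @ \oo --> cRe z /\ (fun N => cIm (u N)) @ \oo --> cIm z.

Definition clim u : C :=
  Complex (limn (fun N => cRe (u N))) (limn (fun N => cIm (u N))).

Lemma ccvg_clim u z : ccvg u z -> clim u = z.
Proof.
by rewrite /clim => -[/(cvg_lim (@Rhausdorff R))-> /(cvg_lim (@Rhausdorff R))->]; case: z.
Qed.

Lemma ccvg_unique u z w : ccvg u z -> ccvg u w -> z = w.
Proof. by move=> /ccvg_clim<- /ccvg_clim. Qed.

Lemma ccvg_sum T (r : seq T) (u : T -> nat -> C) (l : T -> C) :
  (forall p, ccvg (u p) (l p)) ->
  ccvg (fun N => \sum_(p <- r) u p N) (\sum_(p <- r) l p).
Proof.
move=> ul; split.
  under eq_fun do rewrite cRe_sum.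
  rewrite cRe_sum; apply: cvg_big => [|p _]; [exact: add_continuous | exact: (ul p).1].
under eq_fun do rewrite cIm_sum.
rewrite cIm_sum; apply: cvg_big => [|p _]; [exact: add_continuous | exact: (ul p).2].
Qed.

Lemma ccvgMl (c : C) (a : R ^nat) (l : R) :
  a @ \oo --> l -> ccvg (fun N => c * (a N)%:C%C) (c * l%:C%C).
Proof.
move=> al; split.
  under eq_fun do rewrite cReM /= mulr0 subr0.
  by rewrite cReM /= mulr0 subr0; exact: cvgMl_tmp.
under eq_fun do rewrite cImM /= mulr0 add0r.
by rewrite cImM /= mulr0 add0r; exact: cvgMl_tmp.
Qed.

End ComplexSequences.

Section FlowSeries.
Variables (R : realType) (n : nat) (g : 'rV[R]_n -> R).
Local Notation C := R[i].
Implicit Types (f h : cfun R n) (x t : 'rV[R]_n).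

Definition flow_partial (e : R) f N x t : C :=
  \sum_(k < N) ((e%:C%C * 'i%C) ^+ k / k`!%:R) * iter k (Xg g) f x t.

Lemma expiX_partialE f N x t : expiX_partial g f N x t = flow_partial 1 f N x t.
Proof. by rewrite /flow_partial rmorph1 mul1r. Qed.

Lemma flow_partial_tpoly e s N x t :
  flow_partial e (tpoly s) N x t =
  \sum_(p <- s) p.2 x * character p.1 x t *
                (series (exp_coeff (e * ypair g p.1 x)) N)%:C%C.
Proof.
rewrite /flow_partial.
under eq_bigr do rewrite iter_Xg_tpoly /tpoly big_map mulr_sumr.
rewrite exchange_big /=; apply: eq_bigr => p _.
rewrite /series /= big_mkord rmorph_sum mulr_sumr; apply: eq_bigr => k _.
rewrite /exp_coeff /Xg_eigenvalue rmorphM rmorphXn fmorphV rmorph_nat /=.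
have -> : (e * ypair g p.1 x)%:C%C = e%:C%C * 'i%C * (- 'i * (ypair g p.1 x)%:C)%C :> C.
  by apply: complex_ext; rewrite /= ?cReM ?cImM /=; ring.
by rewrite !exprMn; ring.
Qed.

Definition expY (e : R) m x : C := (expR (e * ypair g m x))%:C%C.

Lemma flow_tpoly_cvg e s x t :
  ccvg (fun N => flow_partial e (tpoly s) N x t) (tpoly (tscale (expY e) s) x t).
Proof.
under eq_fun do rewrite flow_partial_tpoly.
rewrite /tpoly big_map; apply: ccvg_sum => p /=.
rewrite -[X in ccvg _ X]mulrA [X in ccvg _ X]mulrC; apply: ccvgMl.
exact: is_cvg_series_exp_coeff.
Qed.

Lemma Xg_local f h x : f x = h x -> Xg g f x = Xg g h x.
Proof. by move=> fh; apply/funext => t; rewrite /Xg /dtheta fh. Qed.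

Lemma iter_Xg_local k f h x : f x = h x -> iter k (Xg g) f x = iter k (Xg g) h x.
Proof. by move=> fh; elim: k => [|k IHk] //=; exact: Xg_local. Qed.

Lemma flow_partial_local e f h N x t :
  f x = h x -> flow_partial e f N x t = flow_partial e h N x t.
Proof. by move=> fh; apply: eq_bigr => k _; rewrite (iter_Xg_local k fh). Qed.

End FlowSeries.

Section Monomials.
Variables (R : realType) (n : nat).
Local Notation C := R[i].
Implicit Types (m : 'rV[int]_n) (x t : 'rV[R]_n).

Lemma characterD m m' x t :
  character (m + m') x t = character m x t * character m' x t.
Proof.
rewrite /character -expiD /dotR -big_split; congr expi; apply: eq_bigr => i _.
by rewrite !mxE intrD mulrDl.
Qed.

Lemma character0 x t : character 0 x t = 1.
Proof.
rewrite /character /dotR big1 ?expi0 // => i _.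
by rewrite !mxE mul0r.
Qed.

Lemma ypairD (g : 'rV[R]_n -> R) m m' x :
  ypair g (m + m') x = ypair g m x + ypair g m' x.
Proof. by rewrite /ypair -big_split; apply: eq_bigr => j _; rewrite mxE intrD mulrDl. Qed.

Lemma ypair0 (g : 'rV[R]_n -> R) x : ypair g 0 x = 0.
Proof. by rewrite /ypair big1 // => j _; rewrite mxE mul0r. Qed.

Lemma wmonomialE g m x t :
  wmonomial g m x t = (expR (ypair g m x))%:C%C * character m x t.
Proof.
rewrite /wmonomial /character /dotR /ypair.
have expRC_intrM :=
  @morph_intrM R (fun a => (expR a)%:C%C) (@expR_complexD R) (@expR_complex0 R).
have expi_intrM := @morph_intrM R (@expi R) (@expiD R) (@expi0 R).
rewrite (big_morph (fun a => (expR a)%:C%C) (@expR_complexD R) (@expR_complex0 R)).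
rewrite (big_morph (@expi R) (@expiD R) (@expi0 R)) -big_split.
by apply: eq_bigr => j _; rewrite /wcoord expfzMl mxE expRC_intrM expi_intrM.
Qed.

Lemma wmonomialD g m m' x t :
  wmonomial g (m + m') x t = wmonomial g m x t * wmonomial g m' x t.
Proof. by rewrite !wmonomialE ypairD expR_complexD characterD; ring. Qed.

Lemma wmonomial0 g x t : wmonomial g 0 x t = 1.
Proof. by rewrite wmonomialE ypair0 expR_complex0 character0 mul1r. Qed.

End Monomials.

Section LinearCombinations.
Variables (R : realType) (n : nat) (b : 'rV[int]_n -> cfun R n).
Hypothesis bD : forall m m' x t, b (m + m') x t = b m x t * b m' x t.
Hypothesis b0 : forall x t, b 0 x t = 1.
Local Notation C := R[i].
Implicit Types (s : seq ('rV[int]_n * C)).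

Definition lincomb s : cfun R n := fun x t => \sum_(p <- s) p.2 * b p.1 x t.

Lemma lincomb_cat s1 s2 :
  lincomb (s1 ++ s2) = (fun x t => lincomb s1 x t + lincomb s2 x t).
Proof. by apply/funext => x; apply/funext => t; rewrite /lincomb big_cat. Qed.

Lemma lincomb_scale c s :
  lincomb [seq (p.1, c * p.2) | p <- s] = (fun x t => c * lincomb s x t).
Proof.
apply/funext => x; apply/funext => t; rewrite /lincomb big_map mulr_sumr.
by apply: eq_bigr => p _; rewrite mulrA.
Qed.

Lemma lincomb1 m : lincomb [:: (m, 1)] = b m.
Proof. by apply/funext => x; apply/funext => t; rewrite /lincomb big_seq1 mul1r. Qed.

Lemma lincomb_unit : lincomb [:: (0, 1)] = (fun _ _ => 1).
Proof. by rewrite lincomb1; apply/funext => x; apply/funext => t; rewrite b0. Qed.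

Lemma lincomb_mul s1 s2 :
  lincomb [seq (p.1 + q.1, p.2 * q.2) | p <- s1, q <- s2] =
  (fun x t => lincomb s1 x t * lincomb s2 x t).
Proof.
apply/funext => x; apply/funext => t.
rewrite /lincomb big_allpairs_dep mulr_suml; apply: eq_bigr => p _.
rewrite mulr_sumr; apply: eq_bigr => q _ /=.
by rewrite bD; ring.
Qed.

Lemma gen_algebra_lincomb f : gen_algebra (range b) f <-> exists s, f = lincomb s.
Proof.
split=> [genf | [s ->] S [S1 SD SM SZ] bS].
  apply: (genf [set h | exists s, h = lincomb s]) => [|_ [m _ <-]]; last first.
    by exists [:: (m, 1)]; rewrite lincomb1.
  split.
  - by exists [:: (0, 1)]; rewrite lincomb_unit.
  - by move=> _ _ [s1 ->] [s2 ->]; rewrite -lincomb_cat; eexists.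
  - by move=> _ _ [s1 ->] [s2 ->]; rewrite -lincomb_mul; eexists.
  - by move=> c _ [s1 ->]; rewrite -lincomb_scale; eexists.
elim: s => [|p s IHs].
  have -> : lincomb [::] = (fun x t => 0 * (fun _ _ => 1 : C) x t).
    by apply/funext => x; apply/funext => t; rewrite /lincomb big_nil mul0r.
  exact: SZ.
have -> : lincomb (p :: s) =
          (fun x t => (fun x t => p.2 * b p.1 x t) x t + lincomb s x t).
  by apply/funext => x; apply/funext => t; rewrite /lincomb big_cons.
by apply: SD => //; apply: SZ; apply: bS; exists p.1.
Qed.

End LinearCombinations.

Section FlowOnCharacters.
Variables (R : realType) (n : nat) (g : 'rV[R]_n -> R).
Local Notation C := R[i].
Implicit Types (s : seq ('rV[int]_n * C)) (f : cfun R n).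

Definition const_coefs s := [seq (p.1, fun _ : 'rV[R]_n => p.2) | p <- s].

Lemma lincomb_characterE s : lincomb (@character R n) s = tpoly (const_coefs s).
Proof. by apply/funext => x; apply/funext => t; rewrite /lincomb /tpoly big_map. Qed.

Lemma lincomb_wmonomialE s :
  lincomb (wmonomial g) s = tpoly (tscale (expY g 1) (const_coefs s)).
Proof.
apply/funext => x; apply/funext => t; rewrite /lincomb /tpoly !big_map.
by apply: eq_bigr => p _; rewrite wmonomialE /= /expY mul1r; ring.
Qed.

Lemma expiX_lincomb_cvg s x t :
  expiX_converges_to g (lincomb (@character R n) s) x t (lincomb (wmonomial g) s x t).
Proof.
have := flow_tpoly_cvg g 1 (const_coefs s) x t.
rewrite /expiX_converges_to lincomb_characterE lincomb_wmonomialE.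
by under eq_fun do rewrite -expiX_partialE.
Qed.

(* A junk value where the series diverges, which never happens on A. *)
Definition expiX f : cfun R n := fun x t => clim (fun N => expiX_partial g f N x t).

Lemma expiX_lincomb s : expiX (lincomb (@character R n) s) = lincomb (wmonomial g) s.
Proof. by apply/funext => x; apply/funext => t; exact/ccvg_clim/expiX_lincomb_cvg. Qed.

Lemma lincomb_character_inj x0 s1 s2 :
  lincomb (wmonomial g) s1 x0 = lincomb (wmonomial g) s2 x0 ->
  lincomb (@character R n) s1 = lincomb (@character R n) s2.
Proof.
have inverse_flow s t :
    ccvg (fun N => flow_partial g (-1) (lincomb (wmonomial g) s) N x0 t)
         (lincomb (@character R n) s x0 t).
  have expYK : tscale (expY g (-1)) (tscale (expY g 1) (const_coefs s)) = const_coefs s.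
    rewrite tscale_comp -[RHS]tscale1; apply: eq_tscale => m x.
    by rewrite /expY -rmorphM -expRD mul1r mulN1r addNr expR0.
  have := flow_tpoly_cvg g (-1) (tscale (expY g 1) (const_coefs s)) x0 t.
  by rewrite expYK -lincomb_characterE -lincomb_wmonomialE.
move=> w12; apply/funext => x; apply/funext => t.
apply: (ccvg_unique (inverse_flow s1 t)).
under eq_fun do rewrite (flow_partial_local _ _ _ _ w12).
exact: inverse_flow.
Qed.

End FlowOnCharacters.

Theorem mainTheorem6 (R : realType) (n d : nat) (nu : 'I_d -> 'rV[int]_n)
  (lam : 'I_d -> R) (g : 'rV[R]_n -> R) :
  Delzant nu lam -> symplectic_potential nu lam g ->
  (* e^{iX_g} e^{i m.theta} converges and equals w^m on \check X_P *)
  (forall (m : 'rV[int]_n) (x theta : 'rV[R]_n), polytope_int nu lam x ->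
     expiX_converges_to g (@character R n m) x theta (wmonomial g m x theta))
  /\
  (* e^{iX_g} induces an algebra isomorphism A -> B, e^{im.theta} |-> w^m *)
  exists Phi : cfun R n -> cfun R n,
    let A := gen_algebra (range (@character R n)) in
    let B := gen_algebra (range (wmonomial g)) in
    let agree (f h : cfun R n) :=
      forall x theta, polytope_int nu lam x -> f x theta = h x theta in
    [/\ (forall f, A f -> forall x theta, polytope_int nu lam x ->
           expiX_converges_to g f x theta (Phi f x theta)),
        (forall m, agree (Phi (@character R n m)) (wmonomial g m)),
        (forall f h, A f -> A h ->
           [/\ agree (Phi (fun x t => f x t + h x t))
                     (fun x t => Phi f x t + Phi h x t),
               agree (Phi (fun x t => f x t * h x t))
                     (fun x t => Phi f x t * Phi h x t),
               (forall c : R[i], agree (Phi (fun x t => c * f x t))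
                                       (fun x t => c * Phi f x t)) &
               agree (Phi (fun _ _ => 1)) (fun _ _ => 1)]),
        (forall f h, A f -> A h -> agree (Phi f) (Phi h) -> f = h) &
        ((forall f, A f -> exists h, B h /\ agree (Phi f) h) /\
         (forall h, B h -> exists f, A f /\ agree (Phi f) h))].
Proof.
(* The computation is formal in theta: of the hypotheses only a point of the
   interior of P is used, for injectivity. *)
move=> [_ [x0 x0_int] _ _] _.
have charD := @characterD R n; have char0 := @character0 R n.
have wD := @wmonomialD R n g; have w0 := @wmonomial0 R n g.
have A_lincomb f : gen_algebra (range (@character R n)) f <->
                   exists s, f = lincomb (@character R n) s.
  exact: gen_algebra_lincomb.
have B_lincomb h : gen_algebra (range (wmonomial g)) h <->
                   exists s, h = lincomb (wmonomial g) s.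
  exact: gen_algebra_lincomb.
split=> [m x t _|].
  rewrite -(lincomb1 (@character R n)) -(lincomb1 (wmonomial g)).
  exact: expiX_lincomb_cvg.
exists (expiX g) => A B agree; split.
- by move=> _ /A_lincomb[s ->] x t _; rewrite expiX_lincomb; exact: expiX_lincomb_cvg.
- by move=> m x t _; rewrite -(lincomb1 (@character R n)) expiX_lincomb lincomb1.
- move=> _ _ /A_lincomb[s1 ->] /A_lincomb[s2 ->].
  split=> [x t _|x t _|c x t _|x t _].
  + by rewrite -lincomb_cat !expiX_lincomb lincomb_cat.
  + by rewrite -(lincomb_mul charD) !expiX_lincomb (lincomb_mul wD).
  + by rewrite -lincomb_scale !expiX_lincomb lincomb_scale.
  + by rewrite -(lincomb_unit char0) expiX_lincomb (lincomb_unit w0).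
- move=> _ _ /A_lincomb[s1 ->] /A_lincomb[s2 ->] agree12.
  apply: (lincomb_character_inj (x0 := x0)); apply/funext => t.
  by rewrite -!expiX_lincomb; exact: agree12 x0 t x0_int.
- split=> [_ /A_lincomb[s ->]|_ /B_lincomb[s ->]].
  + exists (lincomb (wmonomial g) s); split; first by apply/B_lincomb; exists s.
    by move=> x t _; rewrite expiX_lincomb.
  + exists (lincomb (@character R n) s); split; first by apply/A_lincomb; exists s.
    by move=> x t _; rewrite expiX_lincomb.
Qed.
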